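(* Let $\hat B=(\hat\beta_{k,j})$ and $\tilde B_0=(\tilde\beta^0_{k,j})$ be real $p\times p$ matrices, let $\hat s$ and $\tilde s$ be their numbers of nonzero entries, and let $\tilde\lambda>0$, $0\le\eta_1<1$, $0<\eta_2^2<1-\eta_1$. Suppose $\|\hat B-\tilde B_0\|_F\le\tilde\lambda\sqrt{\tilde s}$ and $$\#\{(k,j):|\tilde\beta^0_{k,j}|\ge\tilde\lambda/\eta_2\}\ge(1-\eta_1)\tilde s.$$ Then $\hat s\ge(1-\eta_1-\eta_2^2)\tilde s$.
   Context: $\|\cdot\|_F$ denotes the Frobenius norm. *)

From HB Require Import structures.
From mathcomp Require Import all_boot all_order all_algebra.
From mathcomp Require Import reals.
Set Implicit Arguments. Unset Strict Implicit. Unset Printing Implicit Defensive.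
Import Order.TTheory GRing.Theory Num.Theory.
Local Open Scope ring_scope.

Definition frobenius (R : realType) (m n : nat) (A : 'M[R]_(m, n)) : R :=
  Num.sqrt (\sum_(i < m) \sum_(j < n) A i j ^+ 2).

Definition nnz (R : realType) (m n : nat) (A : 'M[R]_(m, n)) : nat :=
  #|[set ij : 'I_m * 'I_n | A ij.1 ij.2 != 0]|.

From HB Require Import structures.
From mathcomp Require Import all_boot all_order all_algebra.
From mathcomp Require Import reals.
From mathcomp Require Import lra.
Import Order.TTheory GRing.Theory Num.Theory.
Local Open Scope ring_scope.

(* An entry of B of size at least t is either in the support of A or an entry
   of A - B of size at least t; since the squared Frobenius norm of A - B is at
   most lam^2 s, Chebyshev's counting bound leaves at most eta2^2 s entries
   of the second kind when t = lam / eta2. *)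

Section LargeEntries.

Context {R : realType} {m n : nat}.

Definition large_entries (t : R) (A : 'M[R]_(m, n)) : {set 'I_m * 'I_n} :=
  [set ij | t <= `|A ij.1 ij.2|].

Lemma frobenius_sqr (A : 'M[R]_(m, n)) :
  frobenius A ^+ 2 = \sum_(ij : 'I_m * 'I_n) A ij.1 ij.2 ^+ 2.
Proof.
rewrite /frobenius pair_big sqr_sqrtr //.
by apply: sumr_ge0 => ij _; apply: sqr_ge0.
Qed.

Lemma card_large_entries_le_frobenius (t : R) (A : 'M[R]_(m, n)) :
  0 <= t -> t ^+ 2 * #|large_entries t A|%:R <= frobenius A ^+ 2.
Proof.
move=> t_ge0; rewrite frobenius_sqr (bigID (mem (large_entries t A))) /=.
rewrite -[leLHS]addr0 mulr_natr -sumr_const; apply: lerD.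
  apply: ler_sum => ij; rewrite inE => large_ij.
  by rewrite -[A _ _ ^+ 2]real_normK ?num_real // lerXn2r ?nnegrE.
by apply: sumr_ge0 => ij _; apply: sqr_ge0.
Qed.

Lemma card_large_entries_le_nnz (A B : 'M[R]_(m, n)) (t : R) :
  (#|large_entries t B| <= nnz A + #|large_entries t (A - B)|)%N.
Proof.
rewrite /nnz; apply: leq_trans (leq_card_setU _ _).
apply/subset_leq_card/subsetP => ij; rewrite !inE !mxE.
by case: eqP => //= ->; rewrite sub0r normrN.
Qed.

End LargeEntries.

Theorem lemma7p2 (R : realType) (p : nat) (Bhat B0 : 'M[R]_p)
  (lam eta1 eta2 : R)
  (hlam : 0 < lam) (heta1 : 0 <= eta1) (heta1' : eta1 < 1)
  (heta2pos : 0 < eta2) (heta2 : 0 < eta2 ^+ 2) (heta2' : eta2 ^+ 2 < 1 - eta1)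
  (hF : frobenius (Bhat - B0) <= lam * Num.sqrt (nnz B0)%:R)
  (hbig : (1 - eta1) * (nnz B0)%:R <=
          #|[set ij : 'I_p * 'I_p | lam / eta2 <= `|B0 ij.1 ij.2|]|%:R) :
  (1 - eta1 - eta2 ^+ 2) * (nnz B0)%:R <= (nnz Bhat)%:R.
Proof.
set s : R := (nnz B0)%:R; set t := lam / eta2.
have t_gt0 : 0 < t by rewrite divr_gt0.
have frob_sqr_le : frobenius (Bhat - B0) ^+ 2 <= lam ^+ 2 * s.
  rewrite -[s]sqr_sqrtr ?ler0n // -exprMn lerXn2r ?nnegrE //.
    exact: sqrtr_ge0.
  by rewrite mulr_ge0 ?sqrtr_ge0 ?ltW.
have few_large_errors : #|large_entries t (Bhat - B0)|%:R <= eta2 ^+ 2 * s.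
  have t_eta2 : t ^+ 2 * eta2 ^+ 2 = lam ^+ 2.
    by rewrite -exprMn divfK ?gt_eqF.
  rewrite -(ler_pM2l (exprn_gt0 2 t_gt0)) mulrA t_eta2.
  exact: le_trans (card_large_entries_le_frobenius _ _ (ltW t_gt0)) frob_sqr_le.
have := card_large_entries_le_nnz Bhat B0 t; rewrite -(ler_nat R) natrD.
rewrite /large_entries -/t in few_large_errors *.
lra.
Qed.
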